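(* Consider the execution of the State Machine Replication protocol (described in the context) between two successive pulses $Pulse_i$ and $Pulse_{i+1}$, in the presence of fewer than $\lfloor n/3 \rfloor$ Byzantine processes and fewer than $\lceil n/6 \rceil - 1$ processes whose state is corrupted by a recurrent transient fault. Then all non-Byzantine processes reach the same state just before $Pulse_{i+1}$.
   Context: System model: $n$ processes in a synchronous, fully connected message-passing system with authenticated channels; Byzantine processes may deviate arbitrarily (including sending different messages to different processes). $M$ is a deterministic state machine with state set $Q$, input alphabet $\Sigma$ and transition function $\delta: Q\times\Sigma\to Q$ (states and inputs are encoded as elements of a totally ordered set, e.g. integers). Each process keeps a local variable input\_value (its current external input) and current\_state (its replica of the state of $M$). Execution is divided into iterations, each triggered by an external global pulse $Pulse$ and consisting of several synchronous rounds. In each iteration every process: (1) sets input\_value to the output of the Median-based Byzantine Agreement algorithm run with input input\_value; (2) sets current\_state to the output of the Median-based Byzantine Agreement algorithm run with input current\_state; (3) sets its replica state (the current\_state used in the next iteration) to $\delta(\text{current\_state}, \text{input\_value})$. Recurrent transient faults occur only at the beginning of a pulse: they arbitrarily corrupt the local state (state value or input) of a non-Byzantine process, which then follows the protocol. Median-based Byzantine Agreement algorithm with parameter $0 \le \alpha < \lceil n/6\rceil - 1$, run by a process with value $v$: (a) send $v$ to all processes; set $A[i]$ to the value received from $p_i$ ($\bot$ if none). (b) For each $i$, in parallel, run a WeakMVBA instance with input $A[i]$ and replace $A[i]$ by its decision, where WeakMVBA is a Byzantine agreement protocol such that all non-faulty processes decide the same value, and if all non-faulty processes have the same input $u$ they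 decide $u$ (otherwise the decision may be any value or the default $\bot$). (c) Remove $\bot$ entries to get a list of length $k$; let $m$ be a most frequent value (deterministic tie-breaking) with count $C[m]$; if $C[m]\ge \lfloor k/3\rfloor+1+\alpha$ output $m$, else output the median of the sorted list (the entry at position $\lfloor k/2\rfloor$; lower middle value for even $k$). *)

(* Values (states / inputs of M) are encoded as integers. *)
From mathcomp Require Import all_boot all_order all_algebra.
Set Implicit Arguments. Unset Strict Implicit. Unset Printing Implicit Defensive.
Import Order.TTheory GRing.Theory Num.Theory.
Local Open Scope ring_scope.

(* Deterministic most-frequent value of a list (ties broken towards the
   smallest value); 0 on the empty list. *)
Definition most_frequent (L : seq int) : int :=
  foldr (fun x acc =>
           if (count_mem acc L < count_mem x L)%N
              || ((count_mem x L == count_mem acc L) && (x < acc))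
           then x else acc) (head 0 L) L.

(* Step (c) of the Median-based BA: from the decided array (None = bottom). *)
Definition mba_output (alpha : nat) (D : seq (option int)) : int :=
  let L := pmap id D in
  let k := size L in
  let m := most_frequent L in
  if (k %/ 3 + 1 + alpha <= count_mem m L)%N then m
  else nth 0 (sort (fun x y : int => x <= y) L) (k %/ 2).

(* Specification of one WeakMVBA instance among the non-Byzantine processes
   (those outside B): agreement, and validity when all non-faulty inputs agree. *)
Definition weak_mvba (n : nat) (B : {set 'I_n})
    (inp dec : 'I_n -> option int) : Prop :=
  exists d : option int,
    (forall p, p \notin B -> dec p = d) /\
    (forall u, (forall p, p \notin B -> inp p = u) -> d = u).

(* Any execution of the Median-based BA with parameter alpha, where each
   non-Byzantine process p starts with value v p and outputs out p.
   A p i : value received by p from i in step (a) (arbitrary if i is Byzantine);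
   D p i : decision of p in the i-th WeakMVBA instance (step (b)). *)
Definition mba_exec (n alpha : nat) (B : {set 'I_n})
    (v out : 'I_n -> int) : Prop :=
  exists A D : 'I_n -> 'I_n -> option int,
    (forall p i, p \notin B -> i \notin B -> A p i = Some (v i)) /\
    (forall i, weak_mvba B (fun p => A p i) (fun p => D p i)) /\
    (forall p, p \notin B ->
       out p = mba_output alpha [seq D p i | i <- enum 'I_n]).

From mathcomp Require Import all_boot all_order all_algebra.

Lemma weak_mvba_agree {n : nat} {B : {set 'I_n}} {inp dec : 'I_n -> option int} :
  weak_mvba B inp dec -> forall p q, p \notin B -> q \notin B -> dec p = dec q.
Proof. by move=> [d [dec_d _]] p q Bp Bq; rewrite !dec_d. Qed.

(* Step (c) is a deterministic function of the array decided in step (b),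
   and that array is common to all non-Byzantine processes. *)
Lemma mba_exec_agree {n alpha : nat} {B : {set 'I_n}} {v out : 'I_n -> int} :
  mba_exec alpha B v out -> forall p q, p \notin B -> q \notin B -> out p = out q.
Proof.
move=> [A [D [_ [mvba out_D]]]] p q Bp Bq.
rewrite (out_D p Bp) (out_D q Bq); congr mba_output; apply: eq_map => i.
exact: weak_mvba_agree (mvba i) p q Bp Bq.
Qed.

Theorem lemma4 (n alpha : nat) (delta : int -> int -> int)
    (B C : {set 'I_n}) (inp_pre st_pre inp0 st0 inp1 st1 st_next : 'I_n -> int) :
  #|B| < n %/ 3 ->
  #|C| < (n + 5) %/ 6 - 1 ->
  [disjoint B & C] ->
  alpha < (n + 5) %/ 6 - 1 ->
  (forall p, p \notin B -> p \notin C -> inp0 p = inp_pre p /\ st0 p = st_pre p) ->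
  mba_exec alpha B inp0 inp1 ->
  mba_exec alpha B st0 st1 ->
  (forall p, p \notin B -> st_next p = delta (st1 p) (inp1 p)) ->
  forall p q, p \notin B -> q \notin B -> st_next p = st_next q.
Proof.
move=> _ _ _ _ _ ba_inp ba_st step p q Bp Bq.
rewrite (step p Bp) (step q Bq).
by rewrite (mba_exec_agree ba_inp p q Bp Bq) (mba_exec_agree ba_st p q Bp Bq).
Qed.
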